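(* Let $k>0$ be real and let $\omega_1,\omega_2$ be the two roots of $x^2+x+1$. Put $A=\omega_1k-1$ and $B=\omega_2k-1$. Then for every integer $n\ge1$, $$J_{-n}=\frac{1}{k^2+k+1}\left[k\left(\frac1k\right)^n+\frac{B\omega_1^n-A\omega_2^n}{\omega_1-\omega_2}\right].$$
   Context: For real $k>0$, the third-order $k$-Jacobsthal sequence $(J_n)=(J_n^{(3)}(k))$ is defined by $J_0=0$, $J_1=1$, $J_2=k-1$ and $J_{n+3}=(k-1)J_{n+2}+(k-1)J_{n+1}+kJ_n$, and extended to negative indices by the backward recurrence $J_{-n}=\frac{1-k}{k}J_{-(n-1)}+\frac{1-k}{k}J_{-(n-2)}+\frac{1}{k}J_{-(n-3)}$ for $n\ge1$. *)

From HB Require Import structures.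
From mathcomp Require Import all_boot all_order all_algebra.
From mathcomp Require Import reals complex.
Set Implicit Arguments. Unset Strict Implicit. Unset Printing Implicit Defensive.
Import Order.TTheory GRing.Theory Num.Theory.
Local Open Scope ring_scope.

Section Jacobsthal.
Variable R : realType.
Variable k : R.

(* Forward: triple (J_n, J_{n+1}, J_{n+2}) for n : nat, via
   J_{n+3} = (k-1) J_{n+2} + (k-1) J_{n+1} + k J_n. *)
Fixpoint Jfwd (n : nat) : R * R * R :=
  match n with
  | O => (0, 1, k - 1)
  | S m => let: (a, b, c) := Jfwd m in (b, c, (k - 1) * c + (k - 1) * b + k * a)
  end.

(* Backward: triple (J_{-n}, J_{-(n-1)}, J_{-(n-2)}) for n : nat, via
   J_{-n} = (1-k)/k J_{-(n-1)} + (1-k)/k J_{-(n-2)} + 1/k J_{-(n-3)}. *)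
Fixpoint Jbwd (n : nat) : R * R * R :=
  match n with
  | O => (0, 1, k - 1)
  | S m => let: (a, b, c) := Jbwd m in
           ((1 - k) / k * a + (1 - k) / k * b + 1 / k * c, a, b)
  end.

Definition J (z : int) : R :=
  match z with
  | Posz n => (Jfwd n).1.1
  | Negz n => (Jbwd n.+1).1.1   (* Negz n = -(n+1) *)
  end.
End Jacobsthal.

From HB Require Import structures.
From mathcomp Require Import all_boot all_order all_algebra.
From mathcomp Require Import reals complex.
From mathcomp Require Import ring.
Set Implicit Arguments. Unset Strict Implicit. Unset Printing Implicit Defensive.
Import Order.TTheory GRing.Theory Num.Theory.
Local Open Scope ring_scope.
Local Open Scope complex_scope.

(* The sequence u_n := J_{-n} satisfies a third-order linear recurrence whose
   characteristic polynomial is, up to the factor k, (k x - 1)(x^2 + x + 1),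
   with roots 1/k, w1, w2.  The right-hand side is a linear combination of
   (1/k)^n, w1^n and w2^n, so it satisfies the same recurrence; by Vieta
   (w1 + w2 = -1, w1 w2 = 1) it takes the values 0, 0, 1/k of u at n = 0, 1, 2,
   and three initial values determine the whole sequence. *)

Definition linrec3 (R : pzSemiRingType) (p q r : R) (u : nat -> R) : Prop :=
  forall n, u n.+3 = p * u n.+2 + q * u n.+1 + r * u n.

Lemma linrec3_uniq (R : pzSemiRingType) (p q r : R) (u v : nat -> R) :
  linrec3 p q r u -> linrec3 p q r v ->
  u 0 = v 0 -> u 1 = v 1 -> u 2 = v 2 -> u =1 v.
Proof.
move=> urec vrec e0 e1 e2.
have e n : [/\ u n = v n, u n.+1 = v n.+1 & u n.+2 = v n.+2].
  elim: n => [|n [en en1 en2]]; first by split.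
  by split=> //; rewrite urec vrec en en1 en2.
by move=> n; case: (e n).
Qed.

Lemma linrec3_map (R S : pzSemiRingType) (f : {rmorphism R -> S}) (p q r : R)
    (u : nat -> R) :
  linrec3 p q r u -> linrec3 (f p) (f q) (f r) (f \o u).
Proof. by move=> urec n; rewrite /= urec !rmorphD !rmorphM. Qed.

Lemma linrec3_geom (R : comPzSemiRingType) (p q r x : R) :
  x ^+ 3 = p * x ^+ 2 + q * x + r -> linrec3 p q r (fun n => x ^+ n).
Proof.
move=> x3 n; have -> : x ^+ n.+3 = x ^+ n * x ^+ 3 by rewrite -exprD addn3.
by rewrite x3 !exprSr; ring.
Qed.

Section PrimitiveCubeRoots.
Variables (F : idomainType) (w1 w2 : F).
Hypotheses (w1_root : w1 ^+ 2 + w1 + 1 = 0) (w2_root : w2 ^+ 2 + w2 + 1 = 0).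
Hypothesis w12 : w1 != w2.

Lemma prim3_rootsD : w1 + w2 = -1.
Proof.
have : (w1 - w2) * (w1 + w2 + 1) = 0.
  by rewrite -[RHS](subrr 0) -{1}w1_root -w2_root; ring.
move/eqP; rewrite mulf_eq0 subr_eq0 (negbTE w12) /= => /eqP sum1.
by apply/eqP; rewrite -subr_eq0 opprK sum1.
Qed.

Lemma prim3_rootsM : w1 * w2 = 1.
Proof.
have -> : w2 = -1 - w1 by rewrite -prim3_rootsD; ring.
by rewrite -[RHS]subr0 -w1_root; ring.
Qed.

End PrimitiveCubeRoots.

Section BackwardRecurrence.
Variables (F : fieldType) (c : F).
Hypothesis c_neq0 : c != 0.

Local Notation back_rec := (linrec3 ((1 - c) / c) ((1 - c) / c) (1 / c)).

(* (c x - 1)(x^2 + x + 1) is c times the characteristic polynomial of back_rec. *)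
Lemma back_rec_char_root (x : F) : (c * x - 1) * (x ^+ 2 + x + 1) = 0 ->
  x ^+ 3 = (1 - c) / c * x ^+ 2 + (1 - c) / c * x + 1 / c.
Proof.
move=> x_root; apply/eqP; rewrite -subr_eq0; apply/eqP.
by rewrite -[RHS](mulr0 c^-1) -x_root; field.
Qed.

Variables (w1 w2 : F).
Hypotheses (w1_root : w1 ^+ 2 + w1 + 1 = 0) (w2_root : w2 ^+ 2 + w2 + 1 = 0).

Definition Jopp_closed (n : nat) : F :=
  (c ^+ 2 + c + 1)^-1 *
    (c * (1 / c) ^+ n + ((w2 * c - 1) * w1 ^+ n - (w1 * c - 1) * w2 ^+ n) / (w1 - w2)).

Lemma Jopp_closed_rec : back_rec Jopp_closed.
Proof.
have geom x : (c * x - 1) * (x ^+ 2 + x + 1) = 0 -> back_rec (fun n => x ^+ n).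
  by move=> x_root; apply/linrec3_geom/back_rec_char_root.
have geom_inv : back_rec (fun n => (1 / c) ^+ n).
  by apply: geom; rewrite div1r mulfV // subrr mul0r.
have geom1 : back_rec (fun n => w1 ^+ n) by apply: geom; rewrite w1_root mulr0.
have geom2 : back_rec (fun n => w2 ^+ n) by apply: geom; rewrite w2_root mulr0.
move=> n; rewrite /Jopp_closed.
by move: (geom_inv n) (geom1 n) (geom2 n) => /= -> -> ->; ring.
Qed.

Hypothesis w12 : w1 != w2.
Hypothesis c2c1_neq0 : c ^+ 2 + c + 1 != 0.

Lemma Jopp_closed_init :
  [/\ Jopp_closed 0 = 0, Jopp_closed 1 = 0 & Jopp_closed 2 = 1 / c].
Proof.
have w12_neq0 : w1 - w2 != 0 by rewrite subr_eq0.
rewrite /Jopp_closed; split.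
- by rewrite !expr0 !mulr1; field; rewrite w12_neq0 c2c1_neq0.
- by rewrite !expr1; field; rewrite c_neq0 w12_neq0 c2c1_neq0.
- rewrite (_ : (w2 * c - 1) * w1 ^+ 2 - (w1 * c - 1) * w2 ^+ 2
            = (c * (w1 * w2) - (w1 + w2)) * (w1 - w2)); last by ring.
  rewrite (prim3_rootsM w1_root w2_root w12) (prim3_rootsD w1_root w2_root w12).
  by field; rewrite c_neq0 w12_neq0 c2c1_neq0.
Qed.

End BackwardRecurrence.

Section JacobsthalBackward.
Variables (R : realType) (k : R).

Lemma Jbwd_S_head n : (Jbwd k n.+1).1.1
  = (1 - k) / k * (Jbwd k n).1.1 + (1 - k) / k * (Jbwd k n).1.2 + 1 / k * (Jbwd k n).2.
Proof. by rewrite /=; case: Jbwd => [[]]. Qed.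

Lemma Jbwd_S_mid n : (Jbwd k n.+1).1.2 = (Jbwd k n).1.1.
Proof. by rewrite /=; case: Jbwd => [[]]. Qed.

Lemma Jbwd_S_last n : (Jbwd k n.+1).2 = (Jbwd k n).1.2.
Proof. by rewrite /=; case: Jbwd => [[]]. Qed.

Lemma J_opp n : J k (- n%:Z) = (Jbwd k n).1.1.
Proof. by case: n => [|n]; rewrite ?oppr0 // -NegzE. Qed.

Lemma J_opp_rec : linrec3 ((1 - k) / k) ((1 - k) / k) (1 / k) (fun n => J k (- n%:Z)).
Proof. by move=> n; rewrite !J_opp Jbwd_S_head Jbwd_S_last !Jbwd_S_mid. Qed.

Lemma J_opp_init : k != 0 -> J k (- 1%:Z) = 0 /\ J k (- 2%:Z) = 1 / k.
Proof. by move=> k_neq0; rewrite !J_opp /=; split; field. Qed.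

End JacobsthalBackward.

Theorem mainTheorem9 (R : realType) (k : R) (w1 w2 : R[i]) :
  0 < k ->
  root ('X^2 + 'X + 1) w1 -> root ('X^2 + 'X + 1) w2 -> w1 != w2 ->
  forall n : nat, (1 <= n)%N ->
    let A := w1 * k%:C - 1 in
    let B := w2 * k%:C - 1 in
    (J k (- (n%:Z)))%:C =
      (k ^+ 2 + k + 1)%:C^-1 *
        ((k * (1 / k) ^+ n)%:C + (B * w1 ^+ n - A * w2 ^+ n) / (w1 - w2)).
Proof.
move=> k_gt0 w1_root w2_root w12 n _ A B.
rewrite /root !hornerE in w1_root w2_root; move/eqP in w1_root; move/eqP in w2_root.
have k_neq0 : k != 0 := lt0r_neq0 k_gt0.
have c_neq0 : k%:C != 0 by rewrite fmorph_eq0.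
have c2c1E : (k ^+ 2 + k + 1)%:C = k%:C ^+ 2 + k%:C + 1.
  by rewrite !rmorphD rmorphXn rmorph1.
have c2c1_neq0 : k%:C ^+ 2 + k%:C + 1 != 0.
  by rewrite -c2c1E fmorph_eq0 lt0r_neq0 // !addr_gt0 // exprn_gt0.
have J_rec := linrec3_map (real_complex R) (J_opp_rec k).
rewrite !fmorph_div rmorphB rmorph1 in J_rec.
have [J1 J2] := J_opp_init k_neq0.
have [F0 F1 F2] := Jopp_closed_init c_neq0 w1_root w2_root w12 c2c1_neq0.
have -> : (k ^+ 2 + k + 1)%:C^-1 *
    ((k * (1 / k) ^+ n)%:C + (B * w1 ^+ n - A * w2 ^+ n) / (w1 - w2))
    = Jopp_closed k%:C w1 w2 n.
  by rewrite /Jopp_closed c2c1E rmorphM rmorphXn fmorph_div rmorph1.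
apply: (linrec3_uniq J_rec (Jopp_closed_rec c_neq0 w1_root w2_root)).
- by rewrite F0 /comp rmorph0.
- by rewrite F1 /comp J1 rmorph0.
- by rewrite F2 /comp J2 fmorph_div rmorph1.
Qed.
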